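(* Let $G=(V,E)$ be a graph of bounded degree and consider the rescaled SEIS process $\eta_t$ on $G$ with parameters $\lambda>0,\tau>0$, constructed from its graphical representation. Let $R\subset\mathcal{S}$ be the closure of an open set. If $R$ is onset-ordered and $\eta$ is good for $R$, then almost surely: (1) for each $t\ge0$, $\eta_t(x)=2$ for at most one $x$ in the set $\{x\in V:(x,t)\in R\}$; and (2) every potentially active path $\gamma$ contained in $R$ whose base $(y,s)$ satisfies $\eta_s(y)=1$ is active.
   Context: The SEIS process: sites in states $0$ (susceptible), $1$ (exposed), $2$ (infectious). Rescaled graphical representation: on $\mathcal{S}=V\times[0,\infty)$ (topology generated by sets $\{a\}\times(t,t')$, $a\in V\cup E$), independent Poisson processes of recovery labels $\times$ (intensity $\tau$) and onset labels $\star$ (intensity $1$) at each site, and transmission labels $\leftrightarrow$ (intensity $\lambda\tau$) along each edge. The process evolves by: at a $\times$ at $x$, if $x$ is in state $2$ it becomes $0$; at a $\star$ at $x$, if $x$ is in state $1$ it becomes $2$; at a $\leftrightarrow$ on $xy$, if one endpoint is in state $2$ and the other in state $0$, the latter becomes $1$; otherwise nothing happens. A path is a list $(v_1,h_1,\dots,v_{m-1},h_{m-1},v_m)$ with $v_i=\{x_i\}\times(t_{i-1},t_i)$, $t_{i-1}<t_i$, and $h_i=\{x_ix_{i+1}\}\times\{t_i\}$ with $x_ix_{i+1}\in E$; its base is $(x_1,t_0)$ and its end is $(x_m,t_m)$. A path is active if for $i=1,\dots,m-1$, $\eta_{t_i}(x_i)=2$, $\eta_{t_i}(x_{i+1})=1$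 and there is a $\leftrightarrow$ label at $h_i$, and for $i=1,\dots,m$, $\eta_t(x_i)\ne0$ for $t\in(t_{i-1},t_i)$. A path is potentially active if (a) for $i=1,\dots,m-1$ there is a $\leftrightarrow$ label at $h_i$; (b) for $i=1,\dots,m-1$ there is a $\star$ label at some $(x_i,t)\in v_i$ such that there are no $\star$ labels in $\{x_i\}\times(t_{i-1},t)$ and no $\times$ labels in $\{x_i\}\times(t,t_i)$; (c) for any $\star$ label at $(x_m,t)\in v_m$ there are no $\times$ labels in $\{x_m\}\times(t,t_m)$. The base of $R$ is $\mathrm{base}(R)=\{(x,t)\in R:(x,t-\epsilon)\notin R\text{ for all small enough }\epsilon>0\}$. $R$ is onset-ordered if whenever there is a $\star$ label at $(x,t)\in R$ and $\{x\}\times(t,t')\subset R$ with $t<t'$, then for any $\star$ label at a point $(y,s)\in R$ with $s\in(t,t')$ there is a $\times$ label at $(x,s')$ for some $s'\in(t,s)$. $\eta$ is good for $R$ if $\eta_t(x)\ne2$ for all $(x,t)\in\mathrm{base}(R)$. *)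

From HB Require Import structures.
From mathcomp Require Import all_boot all_order all_algebra.
From mathcomp Require Import all_classical all_reals all_analysis.
Set Implicit Arguments. Unset Strict Implicit. Unset Printing Implicit Defensive.
Import Order.TTheory GRing.Theory Num.Theory.
Import numFieldNormedType.Exports.
Local Open Scope classical_set_scope.
Local Open Scope ring_scope.

(* states of the SEIS process: 0 susceptible, 1 exposed, 2 infectious *)
Inductive state := st0 | st1 | st2.

Inductive lab (V E : Type) := LCross of V | LStar of V | LTrans of E.

Fixpoint allP (T : Type) (P : T -> Prop) (s : seq T) : Prop :=
  match s with [::] => True | a :: s' => P a /\ allP P s' end.

Section Defs.
Variables (R : realType) (V E : Type) (ends : E -> V * V).

Definition joins (e : E) (x y : V) := ends e = (x, y) \/ ends e = (y, x).
Definition incident (e : E) (x : V) := (ends e).1 = x \/ (ends e).2 = x.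
Definition simple_graph :=
  (forall e, (ends e).1 <> (ends e).2) /\
  (forall e e' x y, joins e x y -> joins e' x y -> e = e').
Definition bounded_degree :=
  exists D : nat, forall (x : V) (f : 'I_D.+1 -> E),
    (forall i, incident (f i) x) -> ~ injective f.

Definition seis_rate (lam tau : R) (i : lab V E) : R :=
  match i with LCross _ => tau | LStar _ => 1 | LTrans _ => lam * tau end.

Definition count_is (A : set R) (a b : R) (k : nat) :=
  exists s : seq R, [/\ uniq s, [set` s] = A `&` [set u | a < u <= b] & size s = k].

Definition poisson_prob (mu : R) (k : nat) : R :=
  expR (- mu) * mu ^+ k / (k`!)%:R.

(* N is a family, indexed by lab V E, of independent Poisson point processes
   on (0,oo) with rates rate: counts in disjoint intervals of the same
   process and counts of different processes are jointly independent
   Poisson variables with the right means. *)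
Definition indep_poisson (d : measure_display) (Omega : measurableType d)
    (P : probability Omega R) (N : Omega -> lab V E -> set R)
    (rate : lab V E -> R) :=
  [/\ (forall w i, N w i `<=` [set t | 0 < t]),
      (forall i a b k, measurable [set w | count_is (N w i) a b k]) &
      (forall n (I : 'I_n -> lab V E) (a b : 'I_n -> R) (k : 'I_n -> nat),
        (forall j, 0 <= a j <= b j) ->
        (forall j1 j2, j1 != j2 -> I j1 = I j2 -> b j1 <= a j2 \/ b j2 <= a j1) ->
        P [set w | forall j, count_is (N w (I j)) (a j) (b j) (k j)]
        = (\prod_(j < n) poisson_prob (rate (I j) * (b j - a j)) (k j))%:E)].

Section Dyn.
Variables (Cr St : V -> set R) (Tr : E -> set R).

Definition lft (eta : R -> V -> state) (x : V) (t : R) (v : state) :=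
  exists2 eps : R, 0 < eps & forall s, t - eps < s < t -> eta s x = v.
Definition rconst (eta : R -> V -> state) (x : V) (t : R) :=
  exists2 eps : R, 0 < eps & forall s, t <= s < t + eps -> eta s x = eta t x.
Definition infect_cond (eta : R -> V -> state) (x : V) (t : R) :=
  exists e y, [/\ joins e x y, Tr e t & lft eta y t st2].

Definition evolves (eta : R -> V -> state) :=
  (forall x t, 0 <= t -> rconst eta x t) /\
  (forall x t, 0 < t -> exists v, lft eta x t v /\
     [/\ (Cr x t /\ v = st2 -> eta t x = st0),
         (St x t /\ v = st1 -> eta t x = st2),
         (v = st0 /\ infect_cond eta x t -> eta t x = st1) &
         (~ (Cr x t /\ v = st2) -> ~ (St x t /\ v = st1) ->
          ~ (v = st0 /\ infect_cond eta x t) -> eta t x = v)]).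

(* the topology generated by {a} x (t,t') is the disjoint union over
   a in V u E of copies of [0,oo); the closure of an open set is the
   union of the closures of its (open) slices *)
Definition closure_of_open (Rg : set ((V + E) * R)) :=
  exists O : V + E -> set R, (forall a, open (O a)) /\
    forall a t, Rg (a, t) <-> closure (O a `&` [set u | 0 <= u]) t.

Definition in_base (Rg : set ((V + E) * R)) (a : V + E) (t : R) :=
  Rg (a, t) /\ exists2 eps : R, 0 < eps & forall dl, 0 < dl < eps -> ~ Rg (a, t - dl).

Definition good (eta : R -> V -> state) (Rg : set ((V + E) * R)) :=
  forall x t, in_base Rg (inl x) t -> eta t x <> st2.

Definition onset_ordered (Rg : set ((V + E) * R)) :=
  forall x t t', St x t -> Rg (inl x, t) -> t < t' ->
    (forall u, t < u < t' -> Rg (inl x, u)) ->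
    forall y s, St y s -> Rg (inl y, s) -> t < s < t' ->
      exists2 s', t < s' < s & Cr x s'.

(* a path (v_1,h_1,...,v_m): first site x_1, base time t_0, hops
   (t_i, edge x_i x_{i+1}, x_{i+1}) for i = 1..m-1, and end time t_m *)
Record spath := SPath { p_x : V; p_t0 : R; p_hops : seq (R * E * V); p_tend : R }.

Fixpoint inner_segs (x : V) (s : R) (hs : seq (R * E * V)) : seq (V * R * R) :=
  match hs with
  | [::] => [::]
  | (t, e, y) :: hs' => (x, s, t) :: inner_segs y t hs'
  end.
Fixpoint last_seg (x : V) (s : R) (hs : seq (R * E * V)) (tend : R) : V * R * R :=
  match hs with
  | [::] => (x, s, tend)
  | (t, e, y) :: hs' => last_seg y t hs' tend
  end.
Fixpoint hopsx (x : V) (hs : seq (R * E * V)) : seq (V * R * E * V) :=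
  match hs with
  | [::] => [::]
  | (t, e, y) :: hs' => (x, t, e, y) :: hopsx y hs'
  end.

Definition p_inner (p : spath) := inner_segs (p_x p) (p_t0 p) (p_hops p).
Definition p_last (p : spath) := last_seg (p_x p) (p_t0 p) (p_hops p) (p_tend p).
Definition p_segs (p : spath) := rcons (p_inner p) (p_last p).
Definition p_hopsx (p : spath) := hopsx (p_x p) (p_hops p).

Definition wf_path (p : spath) :=
  allP (fun '(x, s, t) => s < t) (p_segs p) /\
  allP (fun '(x, t, e, y) => joins e x y) (p_hopsx p).

Definition path_in (Rg : set ((V + E) * R)) (p : spath) :=
  allP (fun '(x, s, t) => forall u, s < u < t -> Rg (inl x, u)) (p_segs p) /\
  allP (fun '(x, t, e, y) => Rg (inr e, t)) (p_hopsx p).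

Definition active (eta : R -> V -> state) (p : spath) :=
  allP (fun '(x, t, e, y) => [/\ eta t x = st2, eta t y = st1 & Tr e t]) (p_hopsx p) /\
  allP (fun '(x, s, t) => forall u, s < u < t -> eta u x <> st0) (p_segs p).

Definition pot_active (p : spath) :=
  [/\ allP (fun '(x, t, e, y) => Tr e t) (p_hopsx p),
      allP (fun '(x, s, t) => exists u, [/\ s < u < t, St x u,
              (forall w, s < w < u -> ~ St x w) &
              (forall w, u < w < t -> ~ Cr x w)]) (p_inner p) &
      (let '(x, s, t) := p_last p in
       forall u, s < u < t -> St x u -> forall w, u < w < t -> ~ Cr x w)].

End Dyn.
End Defs.

(* Given the labels, the process is deterministic.  Off a null set of label
   configurations, no two onsets inside R happen at the same time, no onset
   happens at one of the countably many times where a slice of R ends, and no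
   transmission label coincides with a label at one of its endpoints; this
   needs the sites met by R to be countable.  Otherwise infinitely many sites
   share a rational time interval inside R, and independent Poisson labels then
   violate onset-ordering almost surely.
   (1) An infectious site of R became infectious at an onset inside R, since R
   is entered at its base in a non-infectious state.  If two sites were
   infectious at once, the earlier onset would be followed by the later one
   while the first site is still in R, so onset-ordering forces a recovery of
   the first site in between: a contradiction.
   (2) Along a potentially active path started in state 1, each segment
   contains an onset and no recovery after it, so the site is infectious at
   the hop; by (1) the neighbour is not, and the transmission label (which
   carries no other label at either endpoint) exposes it. *)

From Pilot Require Import Defs.
From HB Require Import structures.
From mathcomp Require Import all_boot all_order all_algebra.
From mathcomp Require Import all_classical all_reals all_analysis.
From mathcomp Require Import ring lra.
From mathcomp Require Import zify.
Set Implicit Arguments. Unset Strict Implicit. Unset Printing Implicit Defensive.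
Import Order.TTheory GRing.Theory Num.Theory.
Import numFieldNormedType.Exports.
Local Open Scope classical_set_scope.
Local Open Scope ring_scope.

Lemma near_ub_in_itvoo (R : realFieldType) (e s t : R) : 0 < e -> s < t ->
  exists2 u, s < u < t & t - e < u.
Proof.
move=> e0 st; have m0 : 0 < Num.min e (t - s) by rewrite lt_min e0 subr_gt0.
have m1 : Num.min e (t - s) <= e by rewrite ge_min lexx.
have m2 : Num.min e (t - s) <= t - s by rewrite ge_min lexx orbT.
by exists (t - Num.min e (t - s) / 2); [apply/andP; split|]; lra.
Qed.

Lemma near_lb_in_itvoo (R : realFieldType) (e s t : R) : 0 < e -> s < t ->
  exists2 u, s < u < t & u < s + e.
Proof.
move=> e0 st; have st' : - t < - s by rewrite ltrN2.
have [u /andP[su ut] tu] := near_ub_in_itvoo e0 st'.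
by exists (- u); [apply/andP; split|]; lra.
Qed.

Lemma closed_avoid_itvoo (R : realType) (S : set R) q : closed S -> ~ S q ->
  exists2 e : R, 0 < e & forall u, q - e < u < q + e -> ~ S u.
Proof.
move=> cS nSq; have : open (~` S) by rewrite openC.
move=> /(_ q nSq) /nbhs_ballP [e /= e0 he].
exists e => // u /andP[ul ur]; apply: he.
by rewrite /ball /= ltr_norml; apply/andP; split; lra.
Qed.

Section Dynamics.
Variables (R : realType) (V E : Type) (ends : E -> V * V).
Variables (Cr St : V -> set R) (Tr : E -> set R) (eta : R -> V -> state).

Lemma lft_uniq x t v v' : lft eta x t v -> lft eta x t v' -> v = v'.
Proof.
move=> [e1 e10 h1] [e2 e20 h2].
have m0 : 0 < Num.min e1 e2 by rewrite lt_min e10 e20.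
have m1 : Num.min e1 e2 <= e1 by rewrite ge_min lexx.
have m2 : Num.min e1 e2 <= e2 by rewrite ge_min lexx orbT.
have t1 : t - 1 < t by lra.
have [u /andP[_ ut] tu] := near_ub_in_itvoo m0 t1.
by rewrite -(h1 u) ?(h2 u) //; apply/andP; split; lra.
Qed.

Lemma lft_before x t v s : lft eta x t v -> s < t ->
  exists2 u, s < u < t & eta u x = v.
Proof.
move=> [e e0 he] st; have [u /andP[su ut] tu] := near_ub_in_itvoo e0 st.
by exists u; rewrite ?su ?ut // he // tu ut.
Qed.

Hypothesis ev : evolves ends Cr St Tr eta.

Lemma lft_exists x t : 0 < t -> exists v, lft eta x t v.
Proof. by move=> t0; have [v [hv _]] := ev.2 x t t0; exists v. Qed.

Lemma evolves_at x t v : 0 < t -> lft eta x t v ->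
  [/\ Cr x t -> v = st2 -> eta t x = st0,
      St x t -> v = st1 -> eta t x = st2,
      v = st0 -> infect_cond ends Tr eta x t -> eta t x = st1 &
      ~ (Cr x t /\ v = st2) -> ~ (St x t /\ v = st1) ->
      ~ (v = st0 /\ infect_cond ends Tr eta x t) -> eta t x = v].
Proof.
move=> t0 hv; have [v' [hv' [c1 c2 c3 c4]]] := ev.2 x t t0.
rewrite -(lft_uniq hv hv') in c1 c2 c3 c4.
by split=> // *; [apply: c1|apply: c2|apply: c3].
Qed.

Lemma evolves_cases x t v : 0 < t -> lft eta x t v ->
  [\/ eta t x = v, [/\ Cr x t, v = st2 & eta t x = st0],
      [/\ St x t, v = st1 & eta t x = st2] | v = st0 /\ eta t x = st1].
Proof.
move=> t0 hv; have [c1 c2 c3 c4] := evolves_at t0 hv.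
have [[hC v2]|nC] := pselect (Cr x t /\ v = st2); first by apply: Or42; rewrite c1.
have [[hS v1]|nS] := pselect (St x t /\ v = st1); first by apply: Or43; rewrite c2.
have [[v0 hI]|nI] := pselect (v = st0 /\ infect_cond ends Tr eta x t).
  by apply: Or44; rewrite c3.
by apply: Or41; apply: c4.
Qed.

Lemma enter_st2 x t v : 0 < t -> lft eta x t v -> v <> st2 -> eta t x = st2 ->
  v = st1 /\ St x t.
Proof.
move=> t0 hv nv2 e2.
by case: (evolves_cases t0 hv) => [|[]|[]|[]] *; [congruence|congruence|split|congruence].
Qed.

Lemma leave_st2 x t : 0 < t -> lft eta x t st2 -> eta t x <> st2 ->
  Cr x t /\ eta t x = st0.
Proof.
move=> t0 hv n2.
by case: (evolves_cases t0 hv) => [|[]|[]|[]] *; [congruence|split|congruence|congruence].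
Qed.

Lemma leave_st1 x t : 0 < t -> lft eta x t st1 ->
  eta t x = st1 \/ St x t /\ eta t x = st2.
Proof.
move=> t0 hv.
by case: (evolves_cases t0 hv) => [|[]|[]|[]] *; [left|congruence|right|congruence].
Qed.

Lemma cross_recovers x t : 0 < t -> lft eta x t st2 -> Cr x t -> eta t x = st0.
Proof. by move=> t0 hv hC; have [c1 _ _ _] := evolves_at t0 hv; exact: c1. Qed.

Lemma star_onsets x t : 0 < t -> lft eta x t st1 -> St x t -> eta t x = st2.
Proof. by move=> t0 hv hS; have [_ c2 _ _] := evolves_at t0 hv; exact: c2. Qed.

Lemma infection x t : 0 < t -> lft eta x t st0 -> infect_cond ends Tr eta x t ->
  eta t x = st1.
Proof. by move=> t0 hv hI; have [_ _ c3 _] := evolves_at t0 hv; exact: c3. Qed.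

(* [c] is the supremum of the times in [[a, b]] at which [S] fails; right
   continuity puts [c] itself on the [S] side. *)
Lemma last_entry (S : state -> Prop) x a b : 0 <= a -> a < b ->
  ~ S (eta a x) -> S (eta b x) ->
  exists c, [/\ a < c <= b, exists2 v, lft eta x c v & ~ S v, S (eta c x) &
                forall u, c <= u <= b -> S (eta u x)].
Proof.
move=> a0 ab nSa Sb.
pose B := [set s | a <= s <= b /\ ~ S (eta s x)].
have Ba : B a by split; rewrite // lexx ltW.
have hB : has_sup B by split; [exists a|exists b => s [/andP[_ ?] _]].
set c := sup B.
have ac : a <= c by exact: (ub_le_sup hB.2).
have cb : c <= b by apply: ge_sup; [exists a|move=> s [/andP[_ ?] _]].
have after u : c < u <= b -> S (eta u x).
  move=> /andP[cu ub]; apply: contrapT => nS.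
  have : u <= c by apply: (ub_le_sup hB.2); split; rewrite // ub andbT (le_trans ac (ltW cu)).
  by rewrite leNgt cu.
have Sc : S (eta c x).
  apply: contrapT => nSc.
  have cb' : c < b by rewrite lt_neqAle cb andbT; apply: contraPneq nSc => ->.
  have [e e0 he] := ev.1 x c (le_trans a0 ac).
  have [u /andP[cu ub] uc] := near_lb_in_itvoo e0 cb'.
  apply: nSc; rewrite -(he u); last by rewrite (ltW cu) uc.
  by apply: after; rewrite cu ltW.
have ac' : a < c by rewrite lt_neqAle ac andbT; apply: contraPneq nSa => ->.
have [v hv] := lft_exists x (le_lt_trans a0 ac').
exists c; split => //; first by rewrite ac' cb.
- exists v => // Sv; case: hv => e e0 he.
  have [s Bs cs] := sup_adherent e0 hB.
  have sc : s < c.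
    rewrite lt_neqAle (ub_le_sup hB.2 Bs) andbT.
    by apply: contraPneq Sc => <-; case: Bs.
  by case: Bs => _; apply; rewrite he // cs sc.
- move=> u /andP[cu ub]; have [<-|cu'] := eqVneq c u; first by [].
  by apply: after; rewrite ub andbT lt_neqAle cu' cu.
Qed.
End Dynamics.

Section Region.
Variables (R : realType) (V E : Type) (Rg : set ((V + E) * R)).

(* The right end of the segment of the slice of [Rg] at [x] starting at [q];
   for rational [q] these are countably many fixed times. *)
Definition slice_end (x : V) (q : R) :=
  sup [set u | q <= u /\ forall v, q <= v <= u -> Rg (inl x, v)].

Lemma slice_extends x s q t : s < q < t ->
  (forall u, s <= u <= t -> Rg (inl x, u)) -> t <> slice_end x q ->
  exists2 t', t < t' & forall u, s < u < t' -> Rg (inl x, u).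
Proof.
move=> /andP[sq qt] hst nend.
pose I := [set u | q <= u /\ forall v, q <= v <= u -> Rg (inl x, v)].
have It : I t.
  split; first exact: ltW.
  by move=> v /andP[qv vt]; apply: hst; rewrite vt (le_trans (ltW sq) qv).
have [[u Iu tu]|nu] := pselect (exists2 u, I u & t < u).
  exists u => // v /andP[sv vu]; have [vq|qv] := ltP v q.
    by apply: hst; rewrite (ltW sv) (le_trans (ltW vq) (ltW qt)).
  by case: Iu => _; apply; rewrite qv ltW.
have ubt : ubound I t.
  by move=> w Iw; rewrite leNgt; apply/negP => tw; apply: nu; exists w.
case: nend; apply/eqP; rewrite eq_le; apply/andP; split.
  by apply: (ub_le_sup (ex_intro _ t ubt)).
by apply: ge_sup; first exists t.
Qed.

Hypothesis hR : closure_of_open Rg.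

Lemma region_closed a : closed [set t | Rg (a, t)].
Proof.
case: hR => O [_ hO].
have -> : [set t | Rg (a, t)] = closure (O a `&` [set u | 0 <= u]).
  by apply/seteqP; split => t /=; rewrite hO.
exact: closed_closure.
Qed.

Lemma region_ge0 a t : Rg (a, t) -> 0 <= t.
Proof.
case: hR => O [_ hO]; rewrite hO => h.
have : closure [set u : R | 0 <= u] t by apply: (closureS _ h) => u [].
by rewrite -(proj1 (closure_id _) (@closed_ge R 0)).
Qed.

Lemma base_between a q t : q < t -> ~ Rg (a, q) -> Rg (a, t) ->
  exists b, q < b <= t /\ in_base Rg a b.
Proof.
move=> qt nq Rt; have [e e0 he] := closed_avoid_itvoo (@region_closed a) nq.
pose I := [set u | q <= u <= t /\ Rg (a, u)].
have It : I t by split; rewrite // ltW // lexx.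
have lbI : lbound I (q + e).
  move=> u [/andP[qu _] Ru]; rewrite leNgt; apply/negP => ue.
  by apply: (he u) Ru; apply/andP; split; lra.
have hlI : has_lbound I by exists (q + e).
set b := inf I.
have qb : q + e <= b by apply: lb_le_inf => //; exists t.
have bt : b <= t by exact: (ge_inf hlI).
have Rb : Rg (a, b).
  apply: contrapT => nb; have [e' e'0 he'] := closed_avoid_itvoo (@region_closed a) nb.
  have [u Iu ub] := inf_adherent e'0 (conj (ex_intro _ t It) hlI).
  have bu : b <= u by exact: (ge_inf hlI).
  by case: Iu => _; apply: he'; apply/andP; split; lra.
exists b; split; first by apply/andP; split; lra.
split => //; exists (b - q); first by rewrite subr_gt0; lra.
move=> dl /andP[dl0 dle] Rd.
have : b <= b - dl by apply: (ge_inf hlI); split => //; apply/andP; split; lra.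
lra.
Qed.

Lemma region_segment_ends a s t : s < t -> (forall u, s < u < t -> Rg (a, u)) ->
  Rg (a, s) /\ Rg (a, t).
Proof.
move=> st h; split; apply: contrapT => n;
  have [e e0 he] := closed_avoid_itvoo (@region_closed a) n.
- have [u su us] := near_lb_in_itvoo e0 st.
  by apply: (he u) (h u su); case/andP: su => *; apply/andP; split; lra.
- have [u su ut] := near_ub_in_itvoo e0 st.
  by apply: (he u) (h u su); case/andP: su => *; apply/andP; split; lra.
Qed.
End Region.

Section AtMostOneInfectious.
Variables (R : realType) (V E : Type) (ends : E -> V * V).
Variables (Cr St : V -> set R) (Tr : E -> set R) (eta : R -> V -> state).
Variable (Rg : set ((V + E) * R)).
Hypothesis ev : evolves ends Cr St Tr eta.
Hypothesis hR : closure_of_open Rg.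
Hypothesis hon : onset_ordered Cr St Rg.
Hypothesis hgood : good eta Rg.
Hypothesis distinct_onset_times : forall x y t, x <> y ->
  Rg (inl x, t) -> Rg (inl y, t) -> St x t -> St y t -> False.
Hypothesis no_onset_at_slice_end : forall x y (q : rat) t, t = slice_end Rg x (ratr q) ->
  Rg (inl x, t) -> Rg (inl y, t) -> ~ St y t.

Definition infectious_since x s t := [/\ 0 < s <= t, St x s &
  forall u, s <= u <= t -> eta u x = st2 /\ Rg (inl x, u)].

(* Going back from [t], the slice of [Rg] at [z] has a base, where [z] is not
   infectious (goodness); the last switch to state 2 before [t] is an onset. *)
Lemma infectious_since_onset z t : Rg (inl z, t) -> eta t z = st2 ->
  exists s, infectious_since z s t.
Proof.
move=> Rt e2; have t0 := region_ge0 hR Rt.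
have n1 : ~ Rg (inl z, -1) by move/(region_ge0 hR); rewrite lerNr oppr0 ler10.
have m1t : -1 < t by lra.
have [b [/andP[b1 bt] hb]] := base_between hR m1t n1 Rt.
have b0 := region_ge0 hR hb.1.
have nb2 := hgood hb.
have bt' : b < t by rewrite lt_neqAle bt andbT; apply: contraPneq nb2 => ->.
have [c [/andP[bc ct] [v hv nv2] ec h2]] :=
  last_entry ev (S := fun s => s = st2) b0 bt' nb2 e2.
have c0 : 0 < c by lra.
have [_ Sc] := enter_st2 ev c0 hv nv2 ec.
exists c; split => //; first by rewrite c0.
move=> u hu; split; first exact: h2.
apply: contrapT => nu.
have ut : u < t by rewrite lt_neqAle (andP hu).2 andbT; apply: contraPneq nu => ->.
have [b' [/andP[ub' b't] hb']] := base_between hR ut nu Rt.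
by apply: (hgood hb'); apply: h2; case/andP: hu => cu _; apply/andP; split; lra.
Qed.

(* The earlier onset at [x] is followed by the later one at [y] while [x] stays
   in [Rg] (using that [sy] is not the end of a slice), so onset-ordering forces
   a recovery of [x] in between. *)
Lemma infectious_since_ordered x y t sx sy : x <> y ->
  infectious_since x sx t -> infectious_since y sy t -> sx <= sy -> False.
Proof.
move=> xy [/andP[sx0 sxt] Sx hx] [/andP[sy0 syt] Sy hy].
have Rx u : sx <= u <= t -> Rg (inl x, u) by move/hx => [].
have Ry : Rg (inl y, sy) by case: (hy sy); rewrite ?lexx ?syt.
rewrite le_eqVlt => /orP[/eqP esx|sxy].
  by subst sy; apply: (distinct_onset_times xy _ Ry Sx Sy); apply: Rx; rewrite lexx.
have Rxy : Rg (inl x, sy) by apply: Rx; rewrite ltW.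
have [q] := rat_in_itvoo sxy; rewrite in_itv /= => hq.
have [t' syt' ht'] : exists2 t', sy < t' & forall u, sx < u < t' -> Rg (inl x, u).
  apply: (slice_extends hq).
    by move=> u /andP[sxu usy]; apply: Rx; rewrite sxu (le_trans usy).
  by move=> e; apply: (no_onset_at_slice_end e Rxy Ry Sy).
have Rxsx : Rg (inl x, sx) by apply: Rx; rewrite lexx.
have [s' /andP[sxs' s'sy] Cs'] :=
  hon Sx Rxsx (lt_trans sxy syt') ht' Sy Ry (ltac:(by rewrite sxy syt')).
have s'0 : 0 < s' by lra.
have l2 : lft eta x s' st2.
  exists (s' - sx); first by rewrite subr_gt0.
  by move=> u /andP[? ?]; case: (hx u) => [|-> //]; apply/andP; split; lra.
have := cross_recovers ev s'0 l2 Cs'.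
by case: (hx s') => [|-> //]; apply/andP; split; lra.
Qed.

Lemma at_most_one_infectious t x y : Rg (inl x, t) -> Rg (inl y, t) ->
  eta t x = st2 -> eta t y = st2 -> x = y.
Proof.
move=> Rx Ry ex ey; apply: contrapT => xy.
have [sx hx] := infectious_since_onset Rx ex.
have [sy hy] := infectious_since_onset Ry ey.
have [le|le] := leP sx sy; first exact: infectious_since_ordered xy hx hy le.
exact: infectious_since_ordered (nesym xy) hy hx (ltW le).
Qed.
End AtMostOneInfectious.

Section Segments.
Variables (R : realType) (V E : Type) (ends : E -> V * V).
Variables (Cr St : V -> set R) (Tr : E -> set R) (eta : R -> V -> state).
Hypothesis ev : evolves ends Cr St Tr eta.

(* A recovery needs an earlier onset, and an onset followed by a recovery is
   excluded by hypothesis. *)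
Lemma never_susceptible x s t : 0 <= s -> eta s x = st1 ->
  (forall u, s < u < t -> St x u -> forall w, u < w < t -> ~ Cr x w) ->
  forall w, s < w < t -> eta w x <> st0.
Proof.
move=> s0 e1 hsc w /andP[sw wt] e0.
have [c [/andP[sc cw] [v hv nv0] ec0 _]] :=
  last_entry ev (S := fun s => s = st0) (x := x) s0 sw (ltac:(by rewrite e1)) e0.
have c0 : 0 < c by lra.
have v2 : v = st2.
  case: v hv nv0 => // hv _.
  by case: (leave_st1 ev c0 hv) => [|[_]]; rewrite ec0.
subst v; have [Cc _] := leave_st2 ev c0 hv (ltac:(by rewrite ec0)).
have [w' /andP[sw' w'c] ew'] := lft_before hv sc.
have [c' [/andP[sc' c'w'] [v' hv' nv'] ec' _]] :=
  last_entry ev (S := fun s => s = st2) (x := x) s0 sw' (ltac:(by rewrite e1)) ew'.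
have c'0 : 0 < c' by lra.
have [_ Sc'] := enter_st2 ev c'0 hv' nv' ec'.
by apply: (hsc c' _ Sc' c _ Cc); apply/andP; split; lra.
Qed.

Lemma infectious_at_hop x s t u : 0 <= s -> eta s x = st1 -> s < u < t -> St x u ->
  (forall w, s < w < u -> ~ St x w) -> (forall w, u < w < t -> ~ Cr x w) ->
  ~ Cr x t ->
  [/\ forall w, s < w < t -> eta w x <> st0, lft eta x t st2 & eta t x = st2].
Proof.
move=> s0 e1 /andP[su ut] Su nS nC nCt.
have nz : forall w, s < w < t -> eta w x <> st0.
  apply: never_susceptible => // c' /andP[sc' c't] Sc' c /andP[c'c ct].
  have [c'u|uc'] := ltP c' u; first by move=> _; apply: (nS c') Sc'; rewrite sc'.
  by apply: nC; apply/andP; split; lra.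
have u0 : 0 < u by lra.
have eu : eta u x = st2.
  have [v hv] := lft_exists ev x u0.
  have [w /andP[sw wu] ew] := lft_before hv su.
  case: v hv ew => hv ew.
  - by case: (nz w); rewrite ?ew // sw (lt_trans wu ut).
  - exact: (star_onsets ev (x := x) u0 hv Su).
  - apply: contrapT => n2; have [_ h0] := leave_st2 ev u0 hv n2.
    by apply: (nz u) => //; rewrite su ut.
have on2 w : u <= w < t -> eta w x = st2.
  move=> /andP[uw wt]; apply: contrapT => n2.
  have [euw|uw'] := eqVneq u w; first by subst w.
  have uw'' : u < w by rewrite lt_neqAle uw' uw.
  have [c [/andP[uc cw] [v hv nv] ec _]] :=
    last_entry ev (S := fun s => s <> st2) (x := x) (ltW u0) uw'' (ltac:(by rewrite eu)) n2.
  have c0 : 0 < c by lra.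
  have v2 : v = st2 by apply: contrapT.
  subst v; have [Cc _] := leave_st2 ev c0 hv ec.
  by apply: (nC c) => //; apply/andP; split; lra.
have l2 : lft eta x t st2.
  exists (t - u); first by rewrite subr_gt0.
  by move=> w /andP[? ?]; apply: on2; apply/andP; split; lra.
split => //; apply: contrapT => n2.
by have [] := leave_st2 ev (lt_trans u0 ut) l2 n2.
Qed.
End Segments.

Section Paths.
Variables (R : realType) (V E : Type) (ends : E -> V * V).
Variables (Cr St : V -> set R) (Tr : E -> set R) (eta : R -> V -> state).
Variable (Rg : set ((V + E) * R)).
Hypothesis ev : evolves ends Cr St Tr eta.
Hypothesis hR : closure_of_open Rg.
Hypothesis loopless : forall e, (ends e).1 <> (ends e).2.
Hypothesis one_infectious : forall t x y, Rg (inl x, t) -> Rg (inl y, t) ->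
  eta t x = st2 -> eta t y = st2 -> x = y.
Hypothesis no_label_at_transmission : forall e x t, Rg (inl x, t) ->
  incident ends e x -> Tr e t -> ~ Cr x t /\ ~ St x t.

(* [y] carries no other label at [t], and it cannot be infectious at [t] as
   well, since [x] is and the edge is not a loop. *)
Lemma transmission_exposes x y e t : 0 < t -> joins ends e x y -> Tr e t ->
  Rg (inl x, t) -> Rg (inl y, t) -> lft eta x t st2 -> eta t x = st2 ->
  eta t y = st1.
Proof.
move=> t0 je Te Rx Ry l2 ex.
have iy : incident ends e y by rewrite /incident; case: je => ->; [right|left].
have [nC nS] := no_label_at_transmission Ry iy Te.
have [v hv] := lft_exists ev y t0.
case: v hv => hv.
- apply: (infection ev t0 hv); exists e, x; split => //.
  by rewrite /joins; case: je; [right|left].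
- by case: (leave_st1 ev t0 hv) => // -[].
- have ey : eta t y = st2.
    by apply: contrapT => n2; have [] := leave_st2 ev t0 hv n2.
  have xy := one_infectious Rx Ry ex ey; subst y.
  by have := @loopless e; case: je => -> /=.
Qed.

Lemma path_segments_head (y : V) (t : R) (hs : seq (R * E * V)) (tend : R) : exists t'',
  rcons (inner_segs y t hs) (last_seg y t hs tend) =
  (y, t, t'') :: behead (rcons (inner_segs y t hs) (last_seg y t hs tend)).
Proof. by case: hs => [|[[t1 e1] y1] hs] /=; eexists. Qed.

Lemma active_hops (hs : seq (R * E * V)) x s tend : 0 <= s -> eta s x = st1 ->
  Defs.allP (fun '(x, s, t) => s < t) (rcons (inner_segs x s hs) (last_seg x s hs tend)) ->
  Defs.allP (fun '(x, t, e, y) => joins ends e x y) (hopsx x hs) ->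
  Defs.allP (fun '(x, t, e, y) => Tr e t) (hopsx x hs) ->
  Defs.allP (fun '(x, s, t) => exists u, [/\ s < u < t, St x u,
          (forall w, s < w < u -> ~ St x w) &
          (forall w, u < w < t -> ~ Cr x w)]) (inner_segs x s hs) ->
  (let '(x, s, t) := last_seg x s hs tend in
     forall u, s < u < t -> St x u -> forall w, u < w < t -> ~ Cr x w) ->
  Defs.allP (fun '(x, s, t) => forall u, s < u < t -> Rg (inl x, u))
    (rcons (inner_segs x s hs) (last_seg x s hs tend)) ->
  Defs.allP (fun '(x, t, e, y) => [/\ eta t x = st2, eta t y = st1 & Tr e t]) (hopsx x hs) /\
  Defs.allP (fun '(x, s, t) => forall u, s < u < t -> eta u x <> st0)
    (rcons (inner_segs x s hs) (last_seg x s hs tend)).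
Proof.
elim: hs x s => [|[[t e] y] hs IH] x s s0 e1 /=.
  move=> [st _] _ _ _ hl _; split => //; split => //.
  exact: (never_susceptible ev s0 e1 hl).
move=> [st wf] [jxy js] [Te Ts] [[u [hu Su nS nC]] hi] hl [Rxs Rs].
have [_ Rxt] := region_segment_ends hR st Rxs.
have ix : incident ends e x by rewrite /incident; case: jxy => ->; [left|right].
have [nCt _] := no_label_at_transmission Rxt ix Te.
have [nz l2 ex] := infectious_at_hop ev s0 e1 hu Su nS nC nCt.
have [t'' eh] := path_segments_head y t hs tend.
move: wf Rs; rewrite eh /= => -[tt'' wf'] [Ryt'' Rs'].
have [Ryt _] := region_segment_ends hR tt'' Ryt''.
have t0 : 0 < t by lra.
have ey := transmission_exposes t0 jxy Te Rxt Ryt l2 ex.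
have := IH y t (ltW t0) ey; rewrite eh /= => /(_ (conj tt'' wf') js Ts hi hl (conj Ryt'' Rs')).
by move=> [h1 [h2 h3]]; split; split.
Qed.

Lemma pot_active_path_active (p : spath R V E) : wf_path ends p ->
  pot_active Cr St Tr p -> path_in Rg p -> eta (p_t0 p) (p_x p) = st1 ->
  active Tr eta p.
Proof.
case: p => x s hs tend [wf1 wf2] [pa1 pa2 pa3] [pi1 pi2] /= e1.
rewrite /active /p_hopsx /p_segs /p_inner /p_last /=.
have s0 : 0 <= s.
  have [t'' eh] := path_segments_head x s hs tend.
  move: wf1 pi1; rewrite /p_segs /p_inner /p_last /= eh /= => -[st _] [Rs _].
  by have [/(region_ge0 hR)] := region_segment_ends hR st Rs.
exact: active_hops.
Qed.
End Paths.

Definition regular_labels (R : realType) (V E : Type) (ends : E -> V * V)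
    (Rg : set ((V + E) * R)) (Cr St : V -> set R) (Tr : E -> set R) :=
  [/\ forall x y t, x <> y -> Rg (inl x, t) -> Rg (inl y, t) -> St x t -> St y t -> False,
      forall x y (q : rat) t, t = slice_end Rg x (ratr q) ->
        Rg (inl x, t) -> Rg (inl y, t) -> ~ St y t &
      forall e x t, Rg (inl x, t) -> incident ends e x -> Tr e t -> ~ Cr x t /\ ~ St x t].

Lemma regular_region_properties (R : realType) (V E : Type) (ends : E -> V * V)
    (Cr St : V -> set R) (Tr : E -> set R) (eta : R -> V -> state)
    (Rg : set ((V + E) * R)) :
  simple_graph ends -> evolves ends Cr St Tr eta -> closure_of_open Rg ->
  regular_labels ends Rg Cr St Tr -> onset_ordered Cr St Rg -> good eta Rg ->
  (forall t x y, 0 <= t -> Rg (inl x, t) -> Rg (inl y, t) ->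
     eta t x = st2 -> eta t y = st2 -> x = y) /\
  (forall p : spath R V E, wf_path ends p -> pot_active Cr St Tr p -> path_in Rg p ->
     eta (p_t0 p) (p_x p) = st1 -> active Tr eta p).
Proof.
move=> [loopless _] ev hR [onsets slice_ends transmissions] hon hgood.
have one t x y : Rg (inl x, t) -> Rg (inl y, t) -> eta t x = st2 -> eta t y = st2 -> x = y.
  exact: (at_most_one_infectious ev hR hon hgood onsets slice_ends (t := t)).
split=> [t x y _|p]; first exact: one.
exact: (pot_active_path_active ev hR loopless one transmissions (p := p)).
Qed.

Lemma allP_cat (T : Type) (Q : T -> Prop) s1 s2 :
  Defs.allP Q (s1 ++ s2) <-> Defs.allP Q s1 /\ Defs.allP Q s2.
Proof. by elim: s1 => [|x s IH] /=; [tauto|rewrite IH; tauto]. Qed.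

Lemma allP_impl (T : Type) (Q Q' : T -> Prop) s :
  (forall x, Q x -> Q' x) -> Defs.allP Q s -> Defs.allP Q' s.
Proof. by move=> h; elim: s => //= x s IH [/h ? /IH ?]. Qed.

Lemma allP_nth (T : Type) (Q : T -> Prop) (x0 : T) s :
  Defs.allP Q s <-> forall i, (i < size s)%N -> Q (nth x0 s i).
Proof.
elim: s => [|x s IH] /=; first by split.
rewrite IH; split => [[hx hs] [|i] //= /hs //|h]; split; first exact: (h 0%N).
by move=> i hi; apply: (h i.+1).
Qed.

Record count_constraint (L T : Type) :=
  CountConstraint { cc_lab : L; cc_lo : T; cc_hi : T; cc_num : nat }.

Section CountEvents.
Variables (R : realType) (V E : Type) (d : measure_display) (Omega : measurableType d).
Variables (P : probability Omega R) (N : Omega -> lab V E -> set R).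
Variable (rate : lab V E -> R).
Hypothesis hind : indep_poisson P N rate.

Local Notation constraint := (count_constraint (lab V E) R).

Definition satisfies w (c : constraint) :=
  count_is (N w (cc_lab c)) (cc_lo c) (cc_hi c) (cc_num c).
Definition counts_event (l : seq constraint) := [set w | Defs.allP (satisfies w) l].
Definition counts_prob (l : seq constraint) :=
  \prod_(c <- l) Defs.poisson_prob (rate (cc_lab c) * (cc_hi c - cc_lo c)) (cc_num c).
Definition none_of (ls : seq (seq constraint)) :=
  [set w | Defs.allP (fun l => ~ counts_event l w) ls].

Definition disjoint_cc (c c' : constraint) :=
  cc_lab c = cc_lab c' -> cc_hi c <= cc_lo c' \/ cc_hi c' <= cc_lo c.
Fixpoint pairwise_disjoint (l : seq constraint) :=
  if l is c :: l' then Defs.allP (disjoint_cc c) l' /\ pairwise_disjoint l' else True.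
Definition admissible (l : seq constraint) :=
  Defs.allP (fun c => 0 <= cc_lo c <= cc_hi c) l /\ pairwise_disjoint l.

Lemma pairwise_disjoint_nth c0 l i j : pairwise_disjoint l -> (i < j)%N ->
  (j < size l)%N -> disjoint_cc (nth c0 l i) (nth c0 l j).
Proof.
elim: l i j => [|c l IH] [|i] [|j] //= [h1 h2] ij jl.
- by move: h1; rewrite (allP_nth _ c0) => /(_ j jl).
- exact: IH.
Qed.

Lemma pairwise_disjoint_cat l1 l2 : pairwise_disjoint (l1 ++ l2) <->
  [/\ pairwise_disjoint l1, pairwise_disjoint l2 &
      Defs.allP (fun c => Defs.allP (disjoint_cc c) l2) l1].
Proof.
elim: l1 => [|c l1 IH] /=; first by split => [h|[]] //; split.
rewrite allP_cat IH; split.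
  by move=> [[h1 h2] [h3 h4 h5]]; split.
by move=> [[h1 h3] h4 [h2 h5]]; split.
Qed.

Lemma admissible_drop l1 l2 l3 : admissible (l1 ++ l2 ++ l3) -> admissible (l1 ++ l3).
Proof.
rewrite /admissible !allP_cat.
move=> -[[h1 [h2 h3]] /pairwise_disjoint_cat[p1 /pairwise_disjoint_cat[p2 p3 p23] p13]].
split; first by split.
apply/pairwise_disjoint_cat; split => //; apply: allP_impl p13 => c.
by rewrite allP_cat; tauto.
Qed.

Lemma counts_event_cat l1 l2 : counts_event (l1 ++ l2) = counts_event l1 `&` counts_event l2.
Proof. by apply/seteqP; split => w /=; rewrite /counts_event /= allP_cat. Qed.

Lemma counts_event_nil : counts_event [::] = setT.
Proof. by apply/seteqP; split. Qed.

Lemma counts_event_measurable l : measurable (counts_event l).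
Proof.
case: hind => _ hm _.
elim: l => [|c l IH]; first by rewrite counts_event_nil.
have -> : counts_event (c :: l) = [set w | satisfies w c] `&` counts_event l.
  by apply/seteqP; split.
by apply: measurableI => //; apply: hm.
Qed.

Lemma prob_counts_event l : admissible l -> P (counts_event l) = (counts_prob l)%:E.
Proof.
case: l => [|c0 l] hv.
  by rewrite counts_event_nil probability_setT /counts_prob big_nil.
case: hind => _ _ hp.
set s := c0 :: l.
pose I (j : 'I_(size s)) := cc_lab (nth c0 s j).
pose a (j : 'I_(size s)) := cc_lo (nth c0 s j).
pose b (j : 'I_(size s)) := cc_hi (nth c0 s j).
pose k (j : 'I_(size s)) := cc_num (nth c0 s j).
have h1 j : 0 <= a j <= b j by exact: (proj1 (allP_nth _ c0 _) hv.1 j (ltn_ord j)).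
have h2 j1 j2 : j1 != j2 -> I j1 = I j2 -> b j1 <= a j2 \/ b j2 <= a j1.
  move=> ne; have [lt|lt] : (j1 < j2)%N \/ (j2 < j1)%N.
    by case: (ltngtP j1 j2) => //; [left|right|move/val_inj/eqP; rewrite (negbTE ne)].
  - by move/(pairwise_disjoint_nth (c0 := c0) hv.2 lt (ltn_ord j2)).
  - move=> eI; have := pairwise_disjoint_nth (c0 := c0) hv.2 lt (ltn_ord j1) (esym eI).
    by case; [right|left].
have := hp (size s) I a b k h1 h2.
have -> : [set w | forall j, count_is (N w (I j)) (a j) (b j) (k j)] = counts_event s.
  apply/seteqP; split => w h.
    by apply/(allP_nth _ c0) => i hi; apply: (h (Ordinal hi)).
  by move=> j; apply: (proj1 (allP_nth _ c0 _) h j (ltn_ord j)).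
by move=> ->; rewrite /counts_prob (big_nth c0) big_mkord.
Qed.

Lemma none_of_measurable ls : measurable (none_of ls).
Proof.
elim: ls => [|l ls IH]; first by have -> : none_of [::] = setT by apply/seteqP; split.
have -> : none_of (l :: ls) = ~` counts_event l `&` none_of ls by apply/seteqP; split.
by apply: measurableI => //; apply: measurableC; exact: counts_event_measurable.
Qed.

Lemma probability_setD (A B : set Omega) : measurable A -> measurable B ->
  (P (A `\` B) = P A - P (A `&` B))%E.
Proof.
move=> mA mB; rewrite measureD //.
by rewrite (le_lt_trans (probability_le1 P mA)) // ltry.
Qed.

(* Peel off the first forbidden block using P (A `\` B) = P A - P (A `&` B). *)
Lemma prob_counts_none_of l ls : admissible (l ++ flatten ls) ->
  P (counts_event l `&` none_of ls) =
  (counts_prob l * \prod_(l' <- ls) (1 - counts_prob l'))%:E.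
Proof.
elim: ls l => [|l0 ls IH] l hv.
  have -> : none_of [::] = setT by apply/seteqP; split.
  rewrite setIT prob_counts_event; last by move: hv; rewrite /= cats0.
  by rewrite big_nil mulr1.
have e : counts_event l `&` none_of (l0 :: ls) =
   (counts_event l `&` none_of ls) `\` (counts_event (l ++ l0) `&` none_of ls).
  apply/seteqP; split => w /=.
    move=> [El [nl0 Nls]]; split => //; rewrite counts_event_cat => -[[_ ?] _].
    exact: nl0.
  move=> [[El Nls] h]; split => //; split => // El0; apply: h; split => //.
  by rewrite counts_event_cat.
have mA : measurable (counts_event l `&` none_of ls).
  by apply: measurableI; [exact: counts_event_measurable|exact: none_of_measurable].
have mB : measurable (counts_event (l ++ l0) `&` none_of ls).
  by apply: measurableI; [exact: counts_event_measurable|exact: none_of_measurable].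
rewrite e probability_setD //.
have -> : (counts_event l `&` none_of ls) `&` (counts_event (l ++ l0) `&` none_of ls) =
    counts_event (l ++ l0) `&` none_of ls.
  by apply/seteqP; split => w /=; [case|rewrite counts_event_cat; case=> -[]].
rewrite IH; last by move: hv => /=; exact: admissible_drop.
rewrite IH; last by rewrite -catA.
rewrite -EFinB; congr (_%:E).
by rewrite /counts_prob big_cat /= big_cons; ring.
Qed.
End CountEvents.

Lemma count_is0_empty (R : realType) (A : set R) a b : count_is A a b 0 ->
  forall t, a < t <= b -> ~ A t.
Proof.
move=> [s [_ hs sz]] t ht At; case: s hs sz => // hs _.
have : (A `&` [set u | a < u <= b]) t by split.
by rewrite -hs.
Qed.

Lemma count_is1_exists (R : realType) (A : set R) a b : count_is A a b 1 ->
  exists t, a < t <= b /\ A t.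
Proof.
move=> [[|x [|y s]] [_ hs sz]] //.
have : [set` [:: x]] x by rewrite /= inE.
by rewrite hs => -[Ax hx]; exists x.
Qed.

Lemma onemexpRN_ge0_le (R : realType) (x : R) : 0 <= x -> 0 <= 1 - expR (- x) <= x.
Proof.
move=> x0; apply/andP; split; first by rewrite subr_ge0 expR_le1 oppr_le0.
by have := expR_ge1Dx (- x); lra.
Qed.

Lemma le_harmonic_eq0 (R : realType) (C r : R) : 0 <= r ->
  (forall n : nat, r <= C / n.+1%:R) -> r = 0.
Proof.
move=> r0 hr; apply/eqP; rewrite eq_le r0 andbT leNgt; apply/negP => rp.
have C0 : 0 <= C by have := hr 0%N; rewrite divr1; lra.
have := archi_boundP (divr_ge0 C0 (ltW rp)); set m := Num.bound _ => hm.
have := hr m; rewrite ler_pdivlMr ?ltr0n // => hle.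
have : C < r * m%:R by rewrite mulrC -ltr_pdivrMr.
have : r * m%:R <= r * m.+1%:R by rewrite ler_pM2l // ler_nat.
lra.
Qed.

Lemma negligible_if_small (R : realType) (d : measure_display) (Omega : measurableType d)
    (P : probability Omega R) (X : set Omega) (C : R) :
  (forall n : nat, exists A, [/\ measurable A, X `<=` A & (P A <= (C / n.+1%:R)%:E)%E]) ->
  P.-negligible X.
Proof.
move=> h; have [A hA] := choice h.
have mB : measurable (\bigcap_n A n) by apply: bigcapT_measurable => n; case: (hA n).
exists (\bigcap_n A n); split => //; last by apply: sub_bigcap => n _; case: (hA n).
have fin : P (\bigcap_n A n) \is a fin_num.
  by rewrite ge0_fin_numE // (le_lt_trans (probability_le1 P mB)) // ltry.
rewrite -(fineK fin) (@le_harmonic_eq0 _ C (fine (P (\bigcap_n A n)))) ?fine_ge0 // => n.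
rewrite -lee_fin (fineK fin); case: (hA n) => mAn _; apply: le_trans.
by apply: le_measure; rewrite ?inE //; exact: bigcap_inf.
Qed.

Lemma step_crossing (R : realType) (f : nat -> R) t n : f 0%N < t -> t <= f n ->
  exists k, (k < n)%N /\ f k < t <= f k.+1.
Proof.
elim: n => [|n IH] h0 hn; first by move: hn; rewrite leNgt h0.
have [tn|nt] := leP t (f n).
  by have [k [kn hk]] := IH h0 tn; exists k; split => //; apply: ltnW.
by exists n; split => //; rewrite nt hn.
Qed.

Section PoissonNullEvents.
Variables (R : realType) (V E : Type) (d : measure_display) (Omega : measurableType d).
Variables (P : probability Omega R) (N : Omega -> lab V E -> set R).
Variable (rate : lab V E -> R).
Hypothesis hind : indep_poisson P N rate.
Hypothesis rate_gt0 : forall i, 0 < rate i.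

Lemma counts_prob_nil : counts_prob rate [::] = 1.
Proof. by rewrite /counts_prob big_nil. Qed.

Lemma counts_prob_empty i a b :
  counts_prob rate [:: CountConstraint i a b 0] = expR (- (rate i * (b - a))).
Proof.
by rewrite /counts_prob big_cons big_nil /Defs.poisson_prob /= expr0 mulr1 divr1 mulr1.
Qed.

Lemma prob_some_point_le i a b : 0 <= a <= b ->
  (P (counts_event N [::] `&` none_of N [:: [:: CountConstraint i a b 0]])
     <= (rate i * (b - a))%:E)%E.
Proof.
move=> /andP[a0 ab].
rewrite (prob_counts_none_of hind); last by split => //=; split => //; rewrite a0.
rewrite big_cons big_nil mulr1 counts_prob_nil mul1r counts_prob_empty lee_fin.
have ba : 0 <= b - a by rewrite subr_ge0.
by have /andP[_ ->] := onemexpRN_ge0_le (mulr_ge0 (ltW (rate_gt0 i)) ba).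
Qed.

Lemma label_at_negligible i t : P.-negligible [set w | N w i t].
Proof.
have [t0|t0] := leP t 0.
  apply: (negligibleS _ (negligible_set0 P)) => w /= Nt.
  by case: hind => hpos _ _; have := hpos w i t Nt; rewrite /=; lra.
apply: (@negligible_if_small _ _ _ P _ (rate i * t)) => n.
set h := t / n.+1%:R.
have h0 : 0 < h by rewrite divr_gt0.
have ht : h <= t by rewrite ler_pdivrMr ?ltr0n // ler_peMr ?ler1n // ltW.
exists (counts_event N [::] `&` none_of N [:: [:: CountConstraint i (t - h) t 0]]); split.
- apply: measurableI; [exact: (counts_event_measurable hind)|exact: (none_of_measurable hind)].
- move=> w Nt; split => //; split => // hc.
  by apply: (count_is0_empty hc.1 (t := t)) => //; rewrite /=; apply/andP; split; lra.
- apply: le_trans (prob_some_point_le _ _) _; first by apply/andP; split; lra.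
  have -> : t - (t - h) = h by lra.
  by rewrite lee_fin /h mulrA.
Qed.

Lemma common_point_upto_negligible i j (T : R) : i <> j -> 0 < T ->
  P.-negligible [set w | exists t, [/\ 0 < t <= T, N w i t & N w j t]].
Proof.
move=> ij T0.
apply: (@negligible_if_small _ _ _ P _ (rate i * rate j * T ^+ 2)) => n.
set h := T / n.+1%:R.
have h0 : 0 < h by rewrite divr_gt0.
pose cell k (l : lab V E) := [:: CountConstraint l (k%:R * h) (k.+1%:R * h) 0].
pose F k := counts_event N [::] `&` none_of N [:: cell k i; cell k j].
have mF k : measurable (F k).
  apply: measurableI; [exact: (counts_event_measurable hind)|exact: (none_of_measurable hind)].
have hF k : (P (F k) <= (rate i * h * (rate j * h))%:E)%E.
  rewrite /F (prob_counts_none_of hind); last first.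
    split => /=; last by split => //; split => // /ij.
    have : 0 <= k%:R * h by rewrite mulr_ge0 // ltW.
    by split => //; [apply/andP; split|split => //; apply/andP; split];
      rewrite // ler_pM2r // ler_nat.
  rewrite !big_cons big_nil !counts_prob_empty counts_prob_nil.
  have -> : k.+1%:R * h - k%:R * h = h by rewrite -mulrBl -natrB // subSnn mul1r.
  rewrite mul1r mulr1 lee_fin.
  have /andP[a1 a2] := onemexpRN_ge0_le (ltW (mulr_gt0 (rate_gt0 i) h0)).
  have /andP[b1 b2] := onemexpRN_ge0_le (ltW (mulr_gt0 (rate_gt0 j) h0)).
  exact: ler_pM.
exists (\big[setU/set0]_(k < n.+1) F k); split.
- by apply: bigsetU_measurable => k _.
- move=> w [t [/andP[t0 tT] Ni Nj]].
  have [k [kn /andP[hk1 hk2]]] := @step_crossing R (fun k => k%:R * h) t n.+1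
    ltac:(by rewrite /= mul0r) ltac:(by rewrite /= /h mulrC divfK // pnatr_eq0).
  rewrite -bigcup_mkord; exists k => //; split => //.
  have tk : k%:R * h < t <= k.+1%:R * h by rewrite hk1 hk2.
  by split; [|split => //]; move=> [hc _]; exact: (count_is0_empty hc tk).
- apply: le_trans.
    apply: (content_subadditive P) => //; [exact: bigsetU_measurable|exact: subset_refl].
  apply: le_trans; first by apply: lee_sum => k _; exact: hF.
  rewrite sumEFin lee_fin big_const_ord iter_addr addr0 -mulr_natr /h.
  have n0 : (n.+1%:R : R) != 0 by rewrite pnatr_eq0.
  by rewrite le_eqVlt; apply/orP; left; apply/eqP; field.
Qed.

Lemma common_point_negligible i j : i <> j ->
  P.-negligible [set w | exists t, N w i t /\ N w j t].
Proof.
move=> ij; apply: (negligibleS _ (negligible_bigcup (fun T : nat =>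
  common_point_upto_negligible (T := T.+1%:R) ij (ltr0Sn _ _)))).
move=> w [t [Ni Nj]].
have t0 : 0 < t by case: hind => hpos _ _; exact: hpos w i t Ni.
exists (Num.bound t) => //; exists t; split => //.
rewrite t0 /=; have := archi_boundP (ltW t0).
by move/ltW/le_trans; apply; rewrite ler_nat.
Qed.
End PoissonNullEvents.

Lemma expr_onem_le_inv (R : realFieldType) (p : R) n : 0 < p <= 1 ->
  (1 - p) ^+ n <= p^-1 / n.+1%:R.
Proof.
move=> /andP[p0 p1].
have g0 k : 0 <= (1 - p) ^+ k by apply: exprn_ge0; lra.
have bernoulli : (1 - p) ^+ n * (1 + n%:R * p) <= 1.
  elim: n => [|n IH]; first by rewrite expr0 mul0r addr0 mulr1.
  rewrite exprSr -mulrA; apply: le_trans IH; apply: ler_wpM2l => //.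
  have x0 : 0 <= n%:R :> R by [].
  rewrite -natr1; nra.
have key : (1 - p) ^+ n * (p * n.+1%:R) <= 1.
  apply: le_trans bernoulli; apply: ler_wpM2l => //.
  have x0 : 0 <= n%:R :> R by [].
  rewrite -natr1; nra.
have -> : p^-1 / n.+1%:R = 1 / (p * n.+1%:R).
  have pn : (n.+1%:R : R) != 0 by rewrite pnatr_eq0.
  by field; apply/andP; split => //; apply/eqP; lra.
by rewrite ler_pdivlMr // mulr_gt0.
Qed.

Lemma poisson_prob_gt0 (R : realType) (mu : R) k : 0 < mu -> 0 < Defs.poisson_prob mu k.
Proof.
move=> mu0; rewrite /Defs.poisson_prob; apply: mulr_gt0.
  by apply: mulr_gt0; [exact: expR_gt0|exact: exprn_gt0].
by rewrite invr_gt0 ltr0n fact_gt0.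
Qed.

(* Infinitely many sites [y n] whose slices all contain [[q1, q2]]: independent
   blocks, each violating onset-ordering with the same positive probability,
   make onset-ordering a null event. *)
Section OnsetOrderedNull.
Variables (R : realType) (V E : Type) (d : measure_display) (Omega : measurableType d).
Variables (P : probability Omega R) (N : Omega -> lab V E -> set R).
Variable (rate : lab V E -> R).
Hypothesis hind : indep_poisson P N rate.
Variables (rS rC : R).
Hypothesis rate_star : forall x, rate (LStar E x) = rS.
Hypothesis rate_cross : forall x, rate (LCross E x) = rC.
Hypothesis rS0 : 0 < rS.
Hypothesis rC0 : 0 < rC.
Variable (Rg : set ((V + E) * R)).
Variables (y : nat -> V) (q1 q2 : R).
Hypothesis yinj : injective y.
Hypothesis q0 : 0 <= q1.
Hypothesis q12 : q1 < q2.
Hypothesis in_region : forall n u, q1 <= u <= q2 -> Rg (inl (y n), u).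

Let m := (q1 + q2) / 2.
Let m2 := (m + q2) / 2.
Let q1m : q1 < m. Proof. by rewrite /m; have := q12; lra. Qed.
Let mm2 : m < m2. Proof. by rewrite /m2 /m; have := q12; lra. Qed.
Let m2q2 : m2 < q2. Proof. by rewrite /m2 /m; have := q12; lra. Qed.

Definition violation_block k : seq (count_constraint (lab V E) R) :=
  [:: CountConstraint (LStar E (y k.*2)) q1 m 1; CountConstraint (LCross E (y k.*2)) q1 q2 0;
      CountConstraint (LStar E (y k.*2.+1)) m m2 1].
Fixpoint violation_blocks n :=
  if n is n'.+1 then violation_block n' :: violation_blocks n' else [::].

Lemma flatten_violation_blocksS n : flatten (violation_blocks n.+1) =
  violation_block n ++ flatten (violation_blocks n).
Proof. by []. Qed.

Lemma violation_blocks_sites n : Defs.allP (fun c => exists2 i, (i < n.*2)%N &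
    cc_lab c = LStar E (y i) \/ cc_lab c = LCross E (y i)) (flatten (violation_blocks n)).
Proof.
elim: n => [|n IH] //; rewrite flatten_violation_blocksS allP_cat; split.
  split; first by exists n.*2; [rewrite doubleS; lia|left].
  split; first by exists n.*2; [rewrite doubleS; lia|right].
  by split => //; exists n.*2.+1; [rewrite doubleS; lia|left].
by apply: allP_impl IH => c [i hi h]; exists i => //; rewrite doubleS; lia.
Qed.

(* Blocks use pairwise distinct sites, and the two intervals of the same label
   inside a block are disjoint. *)
Lemma violation_blocks_admissible n : admissible (flatten (violation_blocks n)).
Proof.
elim: n => [|n [IH1 IH2]] //.
rewrite flatten_violation_blocksS /admissible allP_cat pairwise_disjoint_cat.
have hm := q1m; have hm2 := mm2; have hm3 := m2q2; have q12' := q12; have q0' := q0.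
split.
  split => //; split; first by rewrite /= q0 ltW.
  split; first by rewrite /= q0 ltW.
  by split => //; rewrite /= ltW //; lra.
split => //.
- by do !split => //=; rewrite /disjoint_cc /= => // _; left.
- have fresh c j : (n.*2 <= j)%N ->
      cc_lab c = LStar E (y j) \/ cc_lab c = LCross E (y j) ->
      Defs.allP (disjoint_cc c) (flatten (violation_blocks n)).
    move=> hj hc; apply: allP_impl (violation_blocks_sites n) => c' [i hi hi'] el.
    exfalso; case: hc => hc; case: hi' => hi'; rewrite hc hi' in el; try discriminate;
      case: el => /yinj el; lia.
  split; first by apply: (fresh _ n.*2) => //; left.
  split; first by apply: (fresh _ n.*2) => //; right.
  by split => //; apply: (fresh _ n.*2.+1) => //; left.
Qed.

Definition block_prob := counts_prob rate (violation_block 0).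

Lemma counts_prob_violation_block k : counts_prob rate (violation_block k) = block_prob.
Proof. by rewrite /block_prob /counts_prob !big_cons big_nil /= !rate_star !rate_cross. Qed.

Lemma block_prob_gt0 : 0 < block_prob.
Proof.
have hm := q1m; have hm2 := mm2; have q12' := q12; have rS0' := rS0; have rC0' := rC0.
rewrite /block_prob /counts_prob !big_cons big_nil /= !rate_star !rate_cross mulr1.
apply: mulr_gt0; first by apply: poisson_prob_gt0; apply: mulr_gt0; lra.
by apply: mulr_gt0; apply: poisson_prob_gt0; apply: mulr_gt0; lra.
Qed.

Lemma block_prob_le1 : block_prob <= 1.
Proof.
have := prob_counts_event hind (violation_blocks_admissible 1).
have -> : flatten (violation_blocks 1) = violation_block 0 by exact: cats0.
rewrite counts_prob_violation_block => h.
have := probability_le1 P (counts_event_measurable hind (violation_block 0)).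
by rewrite h lee_fin.
Qed.

Lemma prob_no_violation_block n :
  P (counts_event N [::] `&` none_of N (violation_blocks n)) = ((1 - block_prob) ^+ n)%:E.
Proof.
rewrite (prob_counts_none_of hind); last exact: violation_blocks_admissible.
rewrite counts_prob_nil mul1r; congr (_%:E).
elim: n => [|n IH]; first by rewrite big_nil expr0.
by rewrite /= big_cons IH counts_prob_violation_block exprS.
Qed.

Lemma onset_ordered_no_violation_block n w :
  onset_ordered (fun x => N w (LCross E x)) (fun x => N w (LStar E x)) Rg ->
  (counts_event N [::] `&` none_of N (violation_blocks n)) w.
Proof.
move=> hon; split => //.
have hm := q1m; have hm2 := mm2; have hm3 := m2q2.
elim: n => [|n IH] //; split => //.
move=> [c1 [c2 [c3 _]]].
have [t [/andP[t1 t2] St]] := count_is1_exists c1.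
have [s [/andP[s1 s2] Ss]] := count_is1_exists c3.
move: t1 t2 s1 s2 => /= t1 t2 s1 s2.
have Rt : Rg (inl (y n.*2), t) by apply: in_region; apply/andP; split; lra.
have Rs : Rg (inl (y n.*2.+1), s) by apply: in_region; apply/andP; split; lra.
have tq2 : t < q2 by lra.
have hR u : t < u < q2 -> Rg (inl (y n.*2), u).
  by move=> /andP[? ?]; apply: in_region; apply/andP; split; lra.
have tsq : t < s < q2 by apply/andP; split; lra.
have [s' /andP[ts' s's] Cs'] := hon _ _ _ St Rt tq2 hR _ _ Ss Rs tsq.
have hs' : q1 < s' <= q2 by apply/andP; split; lra.
exact: (count_is0_empty c2 hs' Cs').
Qed.

Lemma onset_ordered_negligible : P.-negligible
  [set w | onset_ordered (fun x => N w (LCross E x)) (fun x => N w (LStar E x)) Rg].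
Proof.
apply: (@negligible_if_small _ _ _ P _ block_prob^-1) => n.
exists (counts_event N [::] `&` none_of N (violation_blocks n)); split.
- apply: measurableI; first exact: (counts_event_measurable hind).
  exact: (none_of_measurable hind).
- by move=> w; exact: onset_ordered_no_violation_block.
- rewrite prob_no_violation_block lee_fin; apply: expr_onem_le_inv.
  by rewrite block_prob_gt0 block_prob_le1.
Qed.
End OnsetOrderedNull.

Lemma infinite_injective_seq (T : Type) (A : set T) : infinite_set A ->
  exists y : nat -> T, injective y /\ forall n, A (y n).
Proof.
move=> /infiniteP/card_leP[f]; exists (fun n => \val (f (to_setT n))); split.
- move=> n1 n2 h; have h2 := injT (val_inj h).
  by move: (congr1 \val h2).
- by move=> n; exact: set_valP (f (to_setT n)).
Qed.

Lemma bounded_degree_incident_finite (V E : Type) (ends : E -> V * V) :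
  bounded_degree ends -> forall x, finite_set [set e | incident ends e x].
Proof.
move=> [D hD] x; apply: contrapT => /infinite_injective_seq[y [yinj hy]].
apply: (hD x (fun i : 'I_D.+1 => y i)) => [i|i j /yinj /val_inj //]; exact: hy.
Qed.

Lemma negligible_bigcup_countable (d : measure_display) (T : sigmaRingType d)
    (R : realFieldType) (mu : {measure set T -> \bar R}) (I : Type) (A : set I)
    (F : I -> set T) :
  countable A -> (forall i, A i -> mu.-negligible (F i)) ->
  mu.-negligible (\bigcup_(i in A) F i).
Proof.
move=> /countable_injP[f finj] hF.
pose G n := [set w | exists2 i, A i /\ f i = n & F i w].
apply: (negligibleS _ (@negligible_bigcup _ _ _ mu G _)).
  by move=> w [i Ai Fw]; exists (f i) => //; exists i.
move=> n; have [[i [Ai fi]]|none] := pselect (exists i, A i /\ f i = n).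
  apply: (negligibleS _ (hF i Ai)) => w [j [Aj fj] Fj].
  by have -> : i = j by apply: finj; rewrite ?inE // fi fj.
by apply: (negligibleS _ (negligible_set0 mu)) => w [j hj _]; apply: none; exists j.
Qed.

Section RegionSites.
Variables (R : realType) (V E : Type) (Rg : set ((V + E) * R)).

Definition region_sites := [set x : V | exists t, Rg (inl x, t)].
Definition sites_over (ab : rat * rat) :=
  [set x : V | forall u : R, ratr ab.1 <= u <= ratr ab.2 -> Rg (inl x, u)].
Definition rat_itv := [set ab : rat * rat | (ratr ab.1 : R) < ratr ab.2].

Hypothesis hR : closure_of_open Rg.

(* A slice is the closure of an open set, so each of its points lies in the
   closure of an open interval of the slice, which contains a rational one. *)
Lemma region_site_over x t : Rg (inl x, t) -> exists2 ab, rat_itv ab & sites_over ab x.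
Proof.
case: hR => O [oO hO]; rewrite hO => ht.
have [u [Ou u0]] : exists u, O (inl x) u /\ 0 <= u.
  apply: contrapT => nu; move: ht.
  have -> : O (inl x) `&` [set u | 0 <= u] = set0.
    by apply/seteqP; split => // u [Ou u0]; apply: nu; exists u.
  by rewrite closure0.
have := oO (inl x) u Ou; move/nbhs_ballP => [e /= e0 he].
have [a] := rat_in_itvoo (ltr_pwDr e0 (lexx u)); rewrite in_itv /= => /andP[ua ae].
have [b] := rat_in_itvoo ae; rewrite in_itv /= => /andP[ab be].
exists (a, b) => //= v /andP[av vb]; rewrite hO; apply: subset_closure; split.
  apply: he; have h0 : u - v <= 0 by lra.
  by rewrite /ball /= ler0_norm //; lra.
rewrite /=; lra.
Qed.

Lemma region_sites_countable_or_dense : countable region_sites \/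
  exists (y : nat -> V) (ab : rat * rat),
    [/\ injective y, rat_itv ab & forall n, sites_over ab (y n)].
Proof.
have [fin|nfin] := pselect (forall ab, rat_itv ab -> finite_set (sites_over ab)).
  left; apply: (sub_countable (B := \bigcup_(ab in rat_itv) sites_over ab)).
    by apply: subset_card_le => x [t /region_site_over [ab ? ?]]; exists ab.
  apply: bigcup_countable; first exact: countableP.
  by move=> ab /fin; exact: finite_set_countable.
right; have [ab [itv nf]] : exists ab, rat_itv ab /\ ~ finite_set (sites_over ab).
  by apply: contrapT => h; apply: nfin => ab itv; apply: contrapT => nf; apply: h; exists ab.
have [y [yinj hy]] := infinite_injective_seq nf.
by exists y, ab.
Qed.
End RegionSites.

Section RegularLabels.
Variables (R : realType) (V E : Type) (ends : E -> V * V).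
Variables (d : measure_display) (Omega : measurableType d).
Variables (P : probability Omega R) (N : Omega -> lab V E -> set R).
Variable (rate : lab V E -> R).
Hypothesis hind : indep_poisson P N rate.
Hypothesis rate_gt0 : forall i, 0 < rate i.
Variable (Rg : set ((V + E) * R)).
Hypothesis sites_countable : countable (region_sites Rg).

Lemma common_label_time_negligible i j :
  P.-negligible [set w | i <> j /\ exists t, N w i t /\ N w j t].
Proof.
have [->|ij] := pselect (i = j).
  by apply: (negligibleS _ (negligible_set0 P)) => w [/(_ erefl)].
by apply: (negligibleS _ (common_point_negligible hind rate_gt0 ij)) => w [_].
Qed.

Lemma distinct_onset_times_ae : P.-negligible [set w | ~ forall x y t, x <> y ->
  Rg (inl x, t) -> Rg (inl y, t) -> N w (LStar E x) t -> N w (LStar E y) t -> False].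
Proof.
apply: (negligibleS _ (negligible_bigcup_countable sites_countable (fun x _ =>
  negligible_bigcup_countable sites_countable (fun y _ =>
    common_label_time_negligible (LStar E x) (LStar E y))))).
move=> w /= nQ; apply: contrapT => nU; apply: nQ => x y t xy Rx Ry Sx Sy.
by apply: nU; exists x; [exists t|exists y; [exists t|split; [case|exists t]]].
Qed.

Lemma no_onset_at_slice_end_ae : P.-negligible [set w | ~ forall x y (q : rat) t,
  t = slice_end Rg x (ratr q) -> Rg (inl x, t) -> Rg (inl y, t) -> ~ N w (LStar E y) t].
Proof.
apply: (negligibleS _ (negligible_bigcup_countable sites_countable (fun x _ =>
  negligible_bigcup_countable sites_countable (fun y _ =>
  negligible_bigcup_countable (countableP [set: rat]) (fun q _ =>
    label_at_negligible hind rate_gt0 (LStar E y) (slice_end Rg x (ratr q))))))).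
move=> w /= nQ; apply: contrapT => nU; apply: nQ => x y q t tq Rx Ry Sy.
by apply: nU; exists x; [exists t|exists y; [exists t|exists q; rewrite // -tq]].
Qed.

Hypothesis hbd : bounded_degree ends.

Lemma no_label_at_transmission_ae : P.-negligible [set w | ~ forall e x t,
  Rg (inl x, t) -> incident ends e x -> N w (LTrans V e) t ->
  ~ N w (LCross E x) t /\ ~ N w (LStar E x) t].
Proof.
apply: (negligibleS _ (negligible_bigcup_countable sites_countable (fun x _ =>
  negligible_bigcup_countable
    (finite_set_countable (bounded_degree_incident_finite hbd x)) (fun e _ =>
  negligibleU (common_label_time_negligible (LCross E x) (LTrans V e))
              (common_label_time_negligible (LStar E x) (LTrans V e)))))).
move=> w /= nQ; apply: contrapT => nU; apply: nQ => e x t Rx ie Te.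
split => hc; apply: nU; exists x; try by exists t.
- by exists e => //; left; split => //; exists t.
- by exists e => //; right; split => //; exists t.
Qed.

Lemma regular_labels_ae : P.-negligible [set w | ~ regular_labels ends Rg
  (fun x => N w (LCross E x)) (fun x => N w (LStar E x)) (fun e => N w (LTrans V e))].
Proof.
apply: (negligibleS _ (negligibleU distinct_onset_times_ae
  (negligibleU no_onset_at_slice_end_ae no_label_at_transmission_ae))).
move=> w /= nreg; apply: contrapT => nU; apply: nreg.
by split; apply: contrapT => h; apply: nU; [left|right; left|right; right].
Qed.
End RegularLabels.

Theorem lemma4 (R : realType) (V E : Type) (ends : E -> V * V) (lam tau : R)
    (d : measure_display) (Omega : measurableType d) (P : probability Omega R)
    (N : Omega -> lab V E -> set R) (eta : Omega -> R -> V -> state)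
    (Rg : set ((V + E) * R)) :
  simple_graph ends -> bounded_degree ends -> 0 < lam -> 0 < tau ->
  indep_poisson P N (@seis_rate R V E lam tau) ->
  {ae P, forall w, evolves ends (fun x => N w (LCross E x)) (fun x => N w (LStar E x))
                     (fun e => N w (LTrans V e)) (eta w)} ->
  closure_of_open Rg ->
  {ae P, forall w,
    let Cr := fun x => N w (LCross E x) in
    let St := fun x => N w (LStar E x) in
    let Tr := fun e => N w (LTrans V e) in
    onset_ordered Cr St Rg -> good (eta w) Rg ->
    (forall t x y, 0 <= t -> Rg (inl x, t) -> Rg (inl y, t) ->
       eta w t x = st2 -> eta w t y = st2 -> x = y) /\
    (forall p : spath R V E, wf_path ends p -> pot_active Cr St Tr p -> path_in Rg p ->
       eta w (p_t0 p) (p_x p) = st1 -> active Tr (eta w) p)}.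
Proof.
move=> hsimple hbd lam0 tau0 hind hev hR.
have rate_gt0 (i : lab V E) : 0 < seis_rate lam tau i.
  by case: i => /= _; [exact: tau0|exact: ltr01|exact: mulr_gt0].
have [sites_cnt|[y [ab [yinj itv hy]]]] := region_sites_countable_or_dense hR.
- apply: (negligibleS _ (negligibleU hev (regular_labels_ae hind rate_gt0 sites_cnt hbd))).
  move=> w /= nQ; apply: contrapT => nU; apply: nQ => hon hgood.
  apply: regular_region_properties hon hgood => //; apply: contrapT => h; apply: nU.
  + by left.
  + by right.
- have q0 : 0 <= (ratr ab.1 : R) by apply: (region_ge0 hR (hy 0%N _ _)); rewrite lexx ltW.
  apply: (negligibleS _ (onset_ordered_negligible hind (rS := 1) (rC := tau)
    (fun _ => erefl) (fun _ => erefl) ltr01 tau0 yinj q0 itv hy)).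
  by move=> w /= nQ; apply: contrapT => hon; apply: nQ => /hon.
Qed.
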